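(* The LoRA-Null residual weight is in general not a solution of either of the following two problems. Precisely: there exist dimensions $n, m, N$ with $N \ge m$, a matrix $\mathbf{W}_0 \in \mathbb{R}^{n\times m}$ of rank $R$, a matrix $\mathbf{X}_{\text{pre}} \in \mathbb{R}^{m \times N}$, and an integer $1 \le r < R$ with $r<\min(n,m)$, such that the LoRA-Null residual $\mathbf{W}_0' = \mathbf{W}_0 - \mathbf{B}\mathbf{A}$ (defined below) is neither a solution of $$\text{(P1)}\quad \min_{\mathbf{W}'} \|\mathbf{W}' - \mathbf{W}_0\|_{\mathrm F} \ \text{ s.t. } \operatorname{rank}(\mathbf{W}') = R - r,$$ nor a solution of $$\text{(P2)}\quad \min_{\mathbf{W}'} \|\mathbf{W}'\mathbf{X}_{\text{pre}} - \mathbf{W}_0\mathbf{X}_{\text{pre}}\|_{\mathrm F} \ \text{ s.t. } \operatorname{rank}(\mathbf{W}') = R - r,$$ where both minimizations range over $\mathbf{W}' \in \mathbb{R}^{n\times m}$.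
   Context: LoRA-Null construction: given $\mathbf{W}_0 \in \mathbb{R}^{n\times m}$, $\mathbf{X}_{\text{pre}} \in \mathbb{R}^{m\times N}$ and a rank $r$, take an SVD $\mathbf{X}_{\text{pre}} = \mathbf{U}\mathbf{\Sigma}\mathbf{V}^\top$ with $\mathbf{U} \in \mathbb{R}^{m\times m}$ orthogonal and singular values in non-increasing order, and let $\mathbf{U}_{\text{null}} = \mathbf{U}_{[:,-r:]} \in \mathbb{R}^{m\times r}$ be the last $r$ columns of $\mathbf{U}$ (left singular vectors of the $r$ smallest singular values). Take an SVD $\mathbf{W}_0\mathbf{U}_{\text{null}}\mathbf{U}_{\text{null}}^\top = \mathbf{U}'\mathbf{\Sigma}'\mathbf{V}'^\top$ with singular values in non-increasing order and set $\mathbf{B} = \mathbf{U}'_{[:,:r]}\sqrt{\mathbf{\Sigma}'_{[:r]}}$, $\mathbf{A} = \sqrt{\mathbf{\Sigma}'_{[:r]}}\,\mathbf{V}'^\top_{[:r,:]}$. The LoRA-Null residual weight is $\mathbf{W}_0' = \mathbf{W}_0 - \mathbf{B}\mathbf{A}$ (which equals $\mathbf{W}_0 - \mathbf{W}_0\mathbf{U}_{\text{null}}\mathbf{U}_{\text{null}}^\top$). Notation: $\mathbf{M}_{[:,:k]}$, $\mathbf{M}_{[:,-k:]}$ are the first/last $k$ columns, $\mathbf{M}_{[:k,:]}$ the first $k$ rows, $\mathbf{\Sigma}_{[:k]}$ the leading $k\times k$ diagonal block; $\|\cdot\|_{\mathrm F}$ is the Frobenius norm. *)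

From HB Require Import structures.
From mathcomp Require Import all_boot all_order all_algebra.
From mathcomp Require Import Rstruct.
From Stdlib Require Rdefinitions.
Set Implicit Arguments. Unset Strict Implicit. Unset Printing Implicit Defensive.
Import Order.TTheory GRing.Theory Num.Theory.
Local Open Scope ring_scope.

Notation Real := Rdefinitions.R.

Definition frob (p q : nat) (A : 'M[Real]_(p, q)) : Real :=
  Num.sqrt (\sum_(i < p) \sum_(j < q) A i j ^+ 2).

Definition is_svd (p q : nat) (X : 'M[Real]_(p, q))
    (U : 'M[Real]_p) (S : 'M[Real]_(p, q)) (V : 'M[Real]_q) : Prop :=
  [/\ U^T *m U = 1%:M, V^T *m V = 1%:M, X = U *m S *m V^T,
      (forall (i : 'I_p) (j : 'I_q), val i <> val j -> S i j = 0) /\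
      (forall (i : 'I_p) (j : 'I_q), val i = val j -> 0 <= S i j) &
      (forall (i i' : 'I_p) (j j' : 'I_q), val i = val j -> val i' = val j' ->
          (val i <= val i')%N -> S i' j' <= S i j)].

(* M_[:, :k] : first k columns (meaningful for k <= q). *)
Definition first_cols (k p q : nat) (M : 'M[Real]_(p, q)) : 'M[Real]_(p, k) :=
  \matrix_(i < p, j < k) \sum_(l < q | val l == val j) M i l.

(* M_[:, -k:] : last k columns (meaningful for k <= q). *)
Definition last_cols (k p q : nat) (M : 'M[Real]_(p, q)) : 'M[Real]_(p, k) :=
  \matrix_(i < p, j < k) \sum_(l < q | val l == (q - k + val j)%N) M i l.

(* M_[:k, :] : first k rows (meaningful for k <= p). *)
Definition first_rows (k p q : nat) (M : 'M[Real]_(p, q)) : 'M[Real]_(k, q) :=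
  \matrix_(i < k, j < q) \sum_(l < p | val l == val i) M l j.

(* Sigma_[:k] : leading k x k block (meaningful for k <= min p q). *)
Definition lead_block (k p q : nat) (M : 'M[Real]_(p, q)) : 'M[Real]_k :=
  first_rows k (first_cols k M).

(* Entrywise square root; on a nonnegative diagonal matrix this is its square root. *)
Definition sqrt_diag (k : nat) (D : 'M[Real]_k) : 'M[Real]_k :=
  map_mx Num.sqrt D.

Definition Unull (m r : nat) (U : 'M[Real]_m) : 'M[Real]_(m, r) :=
  last_cols r U.

Definition loraB (n m r : nat) (U' : 'M[Real]_n) (S' : 'M[Real]_(n, m))
  : 'M[Real]_(n, r) :=
  first_cols r U' *m sqrt_diag (lead_block r S').

Definition loraA (n m r : nat) (S' : 'M[Real]_(n, m)) (V' : 'M[Real]_m)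
  : 'M[Real]_(r, m) :=
  sqrt_diag (lead_block r S') *m first_rows r V'^T.

Definition solves_P1 (n m : nat) (W0 : 'M[Real]_(n, m)) (k : nat)
    (W' : 'M[Real]_(n, m)) : Prop :=
  \rank W' = k /\
  forall W'' : 'M[Real]_(n, m), \rank W'' = k -> frob (W' - W0) <= frob (W'' - W0).

Definition solves_P2 (n m N : nat) (W0 : 'M[Real]_(n, m)) (X : 'M[Real]_(m, N))
    (k : nat) (W' : 'M[Real]_(n, m)) : Prop :=
  \rank W' = k /\
  forall W'' : 'M[Real]_(n, m), \rank W'' = k ->
    frob (W' *m X - W0 *m X) <= frob (W'' *m X - W0 *m X).

From mathcomp Require Import all_boot all_order all_algebra.
From mathcomp Require Import Rstruct.
Set Implicit Arguments. Unset Strict Implicit. Unset Printing Implicit Defensive.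
Import Order.TTheory GRing.Theory Num.Theory.
Local Open Scope ring_scope.

(* Take [W0 = [I_2 | 0]] and [X = diag (1, 1, 0)], with [r = 1].  The direction
   [U_null] left unused by [X] is [e_3], which [W0] kills; hence [B A = 0] and
   the LoRA-Null residual is [W0] itself.  It has rank [2], not the rank [1]
   prescribed in (P1) and (P2), so it is feasible for neither problem. *)

Lemma svd_trmx_mul (p q : nat) (X : 'M[Real]_(p, q)) U S V :
  is_svd X U S V -> U^T *m X = S *m V^T.
Proof. by case=> HU _ -> _ _; rewrite !mulmxA HU mul1mx. Qed.

Lemma svd_diag_mx (p : nat) (X U S V : 'M[Real]_p) :
  is_svd X U S V -> S = diag_mx (\row_i S i i).
Proof.
case=> _ _ _ [Soff _] _; apply/matrixP => i j; rewrite !mxE.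
case: eqP => [-> // | neq_ij]; rewrite mulr0n Soff // => /val_inj.
exact: neq_ij.
Qed.

Lemma orthogonal_det_neq0 (p : nat) (U : 'M[Real]_p) :
  U^T *m U = 1%:M -> \det U != 0.
Proof.
move=> /(congr1 determinant); rewrite det_mulmx det_tr det1 => UU1.
by apply/eqP => U0; move: UU1; rewrite U0 mulr0 => /eqP; rewrite eq_sym oner_eq0.
Qed.

(* Since singular values are sorted, a vanishing one forces the last to vanish. *)
Lemma svd_last_sv_eq0 (m : nat) (X U S V : 'M[Real]_m.+1) :
  is_svd X U S V -> \det X = 0 -> S ord_max ord_max = 0.
Proof.
move=> svdX; have Sdiag := svd_diag_mx svdX.
case: svdX => HU HV defX [_ Snn] Ssort detX0.
have detS0 : \det S = 0.
  move: detX0; rewrite defX !det_mulmx det_tr => /eqP.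
  rewrite !mulf_eq0 (negbTE (orthogonal_det_neq0 HU)).
  by rewrite (negbTE (orthogonal_det_neq0 HV)) orbF => /eqP.
have /prodf_eq0 [k _] : \prod_i (\row_i S i i) 0 i == 0.
  by rewrite -det_diag -Sdiag detS0.
rewrite mxE => /eqP Skk0.
apply/eqP; rewrite eq_le Snn // andbT -Skk0.
by apply: Ssort => //; rewrite -ltnS ltn_ord.
Qed.

Lemma svd_last_col_ker (m : nat) (X U S V : 'M[Real]_m.+1) :
  is_svd X U S V -> \det X = 0 -> (col ord_max U)^T *m X = 0.
Proof.
move=> svdX detX0; rewrite tr_col -row_mul (svd_trmx_mul svdX) row_mul.
suff -> : row ord_max S = 0 by rewrite mul0mx.
by rewrite (svd_diag_mx svdX) row_diag_mx mxE (svd_last_sv_eq0 svdX detX0) scale0r.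
Qed.

Lemma Unull1_col (m : nat) (U : 'M[Real]_m.+1) : Unull 1 U = col ord_max U.
Proof.
apply/matrixP => i j; rewrite !mxE (big_pred1 ord_max) // => l.
by rewrite (ord1 j) subn1 addn0.
Qed.

Lemma svd0_sv_eq0 (p q : nat) (U : 'M[Real]_p) (S : 'M[Real]_(p, q)) V :
  is_svd 0 U S V -> S = 0.
Proof.
case=> HU HV defX _ _.
have <- : U^T *m (U *m S *m V^T) *m V = S.
  by rewrite !mulmxA HU mul1mx -mulmxA HV mulmx1.
by rewrite -defX mulmx0 mul0mx.
Qed.

Lemma loraB0 (n m r : nat) (U' : 'M[Real]_n) :
  loraB r U' (0 : 'M[Real]_(n, m)) = 0.
Proof.
rewrite /loraB; suff -> : sqrt_diag (lead_block r (0 : 'M[Real]_(n, m))) = 0.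
  by rewrite mulmx0.
apply/matrixP => i j; rewrite !mxE big1 ?sqrtr0 // => l _.
by rewrite !mxE big1 // => k _; rewrite mxE.
Qed.

Theorem theorem3 :
  exists (n m N r : nat) (W0 : 'M[Real]_(n, m)) (X : 'M[Real]_(m, N)),
    [/\ (m <= N)%N, (1 <= r)%N, (r < \rank W0)%N, (r < minn n m)%N &
    forall (U : 'M[Real]_m) (S : 'M[Real]_(m, N)) (V : 'M[Real]_N),
      is_svd X U S V ->
      forall (U' : 'M[Real]_n) (S' : 'M[Real]_(n, m)) (V' : 'M[Real]_m),
        is_svd (W0 *m Unull r U *m (Unull r U)^T) U' S' V' ->
        let W0' := W0 - loraB r U' S' *m loraA r S' V' in
        ~ solves_P1 W0 (\rank W0 - r) W0' /\
        ~ solves_P2 W0 X (\rank W0 - r) W0'].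
Proof.
pose W0 : 'M[Real]_(2, 3) := pid_mx 2; pose X : 'M[Real]_3 := pid_mx 2.
have rankW0 : \rank W0 = 2%N by rewrite rank_pid_mx.
have detX0 : \det X = 0.
  apply/eqP; rewrite -[_ == 0]negbK -unitfE -unitmxE -row_free_unit.
  by rewrite /row_free rank_pid_mx.
exists 2%N, 3%N, 3%N, 1%N, W0, X; split; rewrite ?rankW0 //.
move=> U S V svdX U' S' V'.
have W0_Unull : W0 *m Unull 1 U = 0.
  have /(congr1 trmx) := svd_last_col_ker svdX detX0.
  rewrite trmx_mul trmxK tr_pid_mx trmx0 => Xu0.
  by rewrite Unull1_col /W0 -(pid_mx_id Real 2 3 (leqnSn 2)) -mulmxA Xu0 mulmx0.
rewrite W0_Unull mul0mx => /svd0_sv_eq0 ->.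
rewrite loraB0 mul0mx subr0.
by split=> -[]; rewrite rankW0.
Qed.
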